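(* Let $\alpha$ be a non-integer real number and $m\ge1$ an integer with $m\ge1+\alpha$, and let $\phi$ be $m$ times continuously differentiable on $(0,1]$. Suppose there exist finite constants $W>0$, $c_m$, $c'_m$ such that for all $p\in(0,1]$ $$|\phi^{(m)}(p)|\le\alpha_{m-1}Wp^{\alpha-m}+c_m\quad\text{and}\quad|\phi^{(m)}(p)|\ge\alpha_{m-1}Wp^{\alpha-m}+c'_m.$$ Then there exist finite constants $c_{m-1}$, $c'_{m-1}$ such that for all $p\in(0,1]$ $$|\phi^{(m-1)}(p)|\le\alpha_{m-2}Wp^{\alpha-m+1}+c_{m-1}\quad\text{and}\quad|\phi^{(m-1)}(p)|\ge\alpha_{m-2}Wp^{\alpha-m+1}+c'_{m-1}.$$
   Context: $\alpha_0=1$ and $\alpha_i=\prod_{j=1}^i(j-\alpha)$ for $i\ge1$. Here $\phi^{(0)}=\phi$. Differentiability at $1$ is one-sided. *)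

From Stdlib Require Import Reals Lra.
Open Scope R_scope.

Definition I01 (x : R) : Prop := 0 < x <= 1.

Fixpoint alpha_seq (a : R) (i : nat) : R :=
  match i with
  | O => 1
  | S i' => alpha_seq a i' * (INR (S i') - a)
  end.

(* alpha_{k-1}, with the Gamma-function convention
   alpha_i = Gamma(i+1-a)/Gamma(1-a), so that alpha_{-1} = 1/(0 - a) = -1/a
   (the unique extension with alpha_i = (i - a) alpha_{i-1}); only used
   when m = 1, where alpha_{m-2} = alpha_{-1}. *)
Definition alpha_pred (a : R) (k : nat) : R :=
  match k with
  | O => - / a
  | S k' => alpha_seq a k'
  end.

Definition deriv_within01 (f : R -> R) (x l : R) : Prop :=
  forall eps, 0 < eps -> exists delta, 0 < delta /\
    forall y, I01 y -> Rabs (y - x) < delta ->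
      Rabs (f y - f x - l * (y - x)) <= eps * Rabs (y - x).

Definition cont_within01 (f : R -> R) (x : R) : Prop :=
  forall eps, 0 < eps -> exists delta, 0 < delta /\
    forall y, I01 y -> Rabs (y - x) < delta -> Rabs (f y - f x) < eps.

Definition Cm_derivs01 (m : nat) (phi : R -> R) (D : nat -> R -> R) : Prop :=
  (forall x, I01 x -> D O x = phi x) /\
  (forall k x, (k < m)%nat -> I01 x -> deriv_within01 (D k) x (D (S k) x)) /\
  (forall x, I01 x -> cont_within01 (D m) x).

(** Write [C := alpha_{m-2} W] and [e := alpha - m + 1], which is negative
    because [alpha] is not an integer; then [alpha_{m-1} = -e alpha_{m-2}] and
    the hypothesis reads [|phi^(m)(p)| = -e C p^(e-1) + O(1)]. The upper bound
    forces [alpha_{m-1} > 0], hence [C > 0], and then the lower bound makes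
    [phi^(m)] non-vanishing, so of constant sign [s], on some [(0, eps]].
    There [g := phi^(m-1) + s C p^e] has bounded derivative, so [g] is bounded
    and [|phi^(m-1)(p)| = C p^e + O(1)]; on [[eps, 1]] both sides are bounded. *)

From Stdlib Require Import Reals Ranalysis5 Lra Lia.
Open Scope R_scope.

Lemma Rpower_pos x y : 0 < Rpower x y.
Proof. apply exp_pos. Qed.

Lemma Rpower_le_neg_exp E p q :
  E < 0 -> 0 < p <= q -> Rpower q E <= Rpower p E.
Proof.
  intros HE Hpq.
  replace E with (- - E) by ring. rewrite !(Rpower_Ropp _ (- E)).
  apply Rinv_le_contravar; [apply Rpower_pos|].
  apply Rle_Rpower_l; lra.
Qed.

(* Negative powers blow up at [0]: [eps := ((|c| + 1) / K)^(1/E)] works. *)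
Lemma Rpower_neg_exp_dominates_near_0 K E c :
  0 < K -> E < 0 ->
  exists eps, 0 < eps < 1 /\ forall p, 0 < p <= eps -> 0 < K * Rpower p E + c.
Proof.
  intros HK HE.
  set (y := (Rabs c + 1) / K).
  assert (Hy : 0 < y) by (apply Rdiv_lt_0_compat; [pose proof (Rabs_pos c)|]; lra).
  set (eps := Rmin (/ 2) (Rpower y (/ E))).
  assert (Heps : 0 < eps) by (apply Rmin_glb_lt; [lra | apply Rpower_pos]).
  exists eps; split; [split; [lra | unfold eps; pose proof (Rmin_l (/ 2) (Rpower y (/ E))); lra]|].
  intros p Hp.
  assert (Hyp : y <= Rpower p E).
  { replace y with (Rpower (Rpower y (/ E)) E)
      by (rewrite Rpower_mult, Rinv_l, Rpower_1; [reflexivity | lra | lra]).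
    apply Rpower_le_neg_exp; [lra|].
    split; [lra|]. unfold eps in Hp. pose proof (Rmin_r (/ 2) (Rpower y (/ E))); lra. }
  assert (K * y = Rabs c + 1) by (unfold y; field; lra).
  pose proof (Rle_abs (- c)); rewrite Rabs_Ropp in *.
  nra.
Qed.

Lemma Rpower_neg_exp_coeff_nonneg K E c :
  E < 0 -> (forall p, 0 < p <= 1 -> 0 <= K * Rpower p E + c) -> 0 <= K.
Proof.
  intros HE Hbound.
  destruct (Rle_lt_dec 0 K) as [|HK]; [assumption | exfalso].
  destruct (Rpower_neg_exp_dominates_near_0 (- K) E (- c)) as [eps [Heps Hdom]];
    [lra | assumption |].
  specialize (Hdom eps ltac:(lra)). specialize (Hbound eps ltac:(lra)).
  lra.
Qed.

Lemma Rabs_diff_le_of_derivative_bound g g' u v B :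
  u <= v ->
  (forall x, u <= x <= v -> derivable_pt_lim g x (g' x)) ->
  (forall x, u <= x <= v -> Rabs (g' x) <= B) ->
  Rabs (g v - g u) <= B * (v - u).
Proof.
  intros Huv Hder Hbound.
  destruct (MVT_abs g g' u v) as [x [-> Hx]];
    rewrite Rmin_left, Rmax_right in * by assumption; [assumption|].
  rewrite (Rabs_right (v - u)) by lra.
  apply Rmult_le_compat_r; [lra | auto].
Qed.

Lemma continuous_nonvanishing_prod_pos f u v :
  u <= v ->
  (forall x, u <= x <= v -> continuity_pt f x) ->
  (forall x, u <= x <= v -> f x <> 0) ->
  0 < f u * f v.
Proof.
  intros [Huv | <-] Hcont Hnz; [| apply Rsqr_pos_lt, Hnz; lra].
  pose proof (Hnz u ltac:(lra)). pose proof (Hnz v ltac:(lra)).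
  destruct (Rtotal_order (f u) 0) as [Hu | [Hu | Hu]]; [| contradiction |];
    destruct (Rtotal_order (f v) 0) as [Hv | [Hv | Hv]]; try contradiction; try nra.
  - destruct (IVT_interv f u v Hcont Huv Hu Hv) as [x [Hx Hfx]].
    exact (False_ind _ (Hnz x Hx Hfx)).
  - assert (Hcont' : forall x, u <= x <= v -> continuity_pt (- f) x)
      by (intros; apply continuity_pt_opp; auto).
    destruct (IVT_interv (- f)%F u v Hcont' Huv) as [x [Hx Hfx]];
      unfold opp_fct in *; try lra.
    exact (False_ind _ (Hnz x Hx ltac:(lra))).
Qed.

Lemma continuous_nonvanishing_sign f u v :
  (forall x, u < x <= v -> continuity_pt f x) ->
  (forall x, u < x <= v -> f x <> 0) ->
  exists s, Rabs s = 1 /\ forall x, u < x <= v -> Rabs (f x) = s * f x.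
Proof.
  intros Hcont Hnz.
  assert (Hsame : forall x, u < x <= v -> 0 < f x * f v).
  { intros x Hx. apply continuous_nonvanishing_prod_pos; try lra;
      intros; [apply Hcont | apply Hnz]; lra. }
  destruct (Rle_lt_dec 0 (f v)) as [Hv | Hv].
  - exists 1; split; [apply Rabs_R1|].
    intros x Hx. specialize (Hsame x Hx). rewrite Rabs_right; nra.
  - exists (-1); split; [rewrite Rabs_left; lra|].
    intros x Hx. specialize (Hsame x Hx). rewrite Rabs_left; nra.
Qed.

Lemma I01_of_near_interior x y :
  0 < x < 1 -> Rabs (y - x) < Rmin x (1 - x) -> I01 y.
Proof.
  intros Hx Hy.
  pose proof (Rmin_l x (1 - x)). pose proof (Rmin_r x (1 - x)).
  destruct (Rabs_def2 _ _ Hy). unfold I01; lra.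
Qed.

Lemma Rmin_interior_pos x : 0 < x < 1 -> 0 < Rmin x (1 - x).
Proof. intros Hx. apply Rmin_glb_lt; lra. Qed.

Lemma deriv_within01_derivable_pt_lim f x l :
  0 < x < 1 -> deriv_within01 f x l -> derivable_pt_lim f x l.
Proof.
  intros Hx Hd eps Heps.
  destruct (Hd (eps / 2) ltac:(lra)) as [d [Hd0 Hclose]].
  pose proof (Rmin_interior_pos x Hx).
  assert (Hdelta : 0 < Rmin d (Rmin x (1 - x))) by (apply Rmin_glb_lt; lra).
  exists (mkposreal _ Hdelta); simpl; intros h Hh0 Hh.
  pose proof (Rmin_l d (Rmin x (1 - x))). pose proof (Rmin_r d (Rmin x (1 - x))).
  assert (Hxh : Rabs (x + h - x) < Rmin x (1 - x)) by (replace (x + h - x) with h; lra).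
  specialize (Hclose (x + h) (I01_of_near_interior x _ Hx Hxh)).
  replace (x + h - x) with h in Hclose by ring.
  specialize (Hclose ltac:(lra)).
  assert (Hh_pos : 0 < Rabs h) by (apply Rabs_pos_lt; assumption).
  replace ((f (x + h) - f x) / h - l) with ((f (x + h) - f x - l * h) / h)
    by (field; assumption).
  unfold Rdiv; rewrite Rabs_mult, Rabs_inv.
  apply (Rle_lt_trans _ (eps / 2)); [| lra].
  apply (Rmult_le_reg_r (Rabs h)); [assumption|].
  rewrite Rmult_assoc, Rinv_l; lra.
Qed.

Lemma cont_within01_continuity_pt f x :
  0 < x < 1 -> cont_within01 f x -> continuity_pt f x.
Proof.
  intros Hx Hc eps Heps.
  destruct (Hc eps Heps) as [d [Hd0 Hclose]].
  pose proof (Rmin_interior_pos x Hx).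
  exists (Rmin d (Rmin x (1 - x))); split; [apply Rmin_glb_lt; lra|].
  intros y [_ Hy]; simpl in *; unfold R_dist in *.
  pose proof (Rmin_l d (Rmin x (1 - x))). pose proof (Rmin_r d (Rmin x (1 - x))).
  apply Hclose; [apply (I01_of_near_interior x) |]; lra.
Qed.

Lemma Rabs_sub_le_of_bounds x y c c' :
  x <= y + c -> x >= y + c' -> Rabs (x - y) <= Rabs c + Rabs c'.
Proof.
  intros Hc Hc'.
  pose proof (Rle_abs c). pose proof (Rle_abs (- c')). rewrite Rabs_Ropp in *.
  pose proof (Rabs_pos c). pose proof (Rabs_pos c').
  apply Rabs_le; lra.
Qed.

Section PowerAntiderivative.

Variables (f f' : R -> R) (e C c c' : R).
Hypothesis e_neg : e < 0.
Hypothesis C_pos : 0 < C.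
Hypothesis f_derivable : forall x, 0 < x < 1 -> derivable_pt_lim f x (f' x).
Hypothesis f'_continuous : forall x, 0 < x < 1 -> continuity_pt f' x.
Hypothesis f'_bounds : forall p, 0 < p <= 1 ->
  Rabs (f' p) <= - e * C * Rpower p (e - 1) + c /\
  Rabs (f' p) >= - e * C * Rpower p (e - 1) + c'.

Lemma f'_sign_near_0 :
  exists eps s, 0 < eps < 1 /\ Rabs s = 1 /\
    forall p, 0 < p <= eps -> Rabs (f' p) = s * f' p.
Proof.
  destruct (Rpower_neg_exp_dominates_near_0 (- e * C) (e - 1) c')
    as [eps [Heps Hdom]]; [nra | lra |].
  destruct (continuous_nonvanishing_sign f' 0 eps) as [s [Hs Hsign]].
  - intros x Hx. apply f'_continuous; lra.
  - intros x Hx Hzero.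
    specialize (Hdom x Hx). destruct (f'_bounds x ltac:(lra)) as [_ Hlow].
    rewrite Hzero, Rabs_R0 in Hlow. lra.
  - exists eps, s. auto.
Qed.

(* With [s f' = |f'|] on [(0, eps]], the primitive [s C p^e] of
   [s C e p^(e-1)] cancels the singular part of [f']. *)
Lemma Rabs_minus_power_bounded_near_0 eps s :
  0 < eps < 1 -> Rabs s = 1 ->
  (forall p, 0 < p <= eps -> Rabs (f' p) = s * f' p) ->
  exists B, forall p, 0 < p <= eps -> Rabs (Rabs (f p) - C * Rpower p e) <= B.
Proof.
  intros Heps Hs Hsign.
  set (g := fun x => f x + s * C * Rpower x e).
  set (g' := fun x => f' x + s * C * (e * Rpower x (e - 1))).
  set (B := Rabs c + Rabs c').
  assert (Hg : forall x, 0 < x < 1 -> derivable_pt_lim g x (g' x)).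
  { intros x Hx. apply (derivable_pt_lim_plus f (fun x => s * C * Rpower x e)); auto.
    apply (derivable_pt_lim_scal (fun x => Rpower x e)), derivable_pt_lim_power; lra. }
  assert (Hss : s * s = 1).
  { change (s * s) with (Rsqr s). rewrite Rsqr_abs, Hs. apply Rmult_1_r. }
  assert (Hg' : forall x, 0 < x <= eps -> Rabs (g' x) <= B).
  { intros x Hx. destruct (f'_bounds x ltac:(lra)) as [Hup Hlow].
    assert (Hsg' : s * g' x = Rabs (f' x) - (- e * C * Rpower x (e - 1))).
    { unfold g'; rewrite Hsign by assumption.
      transitivity (s * f' x + s * s * (C * e * Rpower x (e - 1))); [ring | rewrite Hss; ring]. }
    rewrite <- (Rmult_1_l (Rabs (g' x))), <- Hs, <- Rabs_mult, Hsg'.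
    apply Rabs_sub_le_of_bounds; assumption. }
  exists (Rabs (g eps) + B).
  intros p Hp.
  assert (Hmvt : Rabs (g eps - g p) <= B * (eps - p)).
  { apply (Rabs_diff_le_of_derivative_bound g g'); [lra | |];
      intros x Hx; [apply Hg | apply Hg']; lra. }
  assert (Hpow : Rabs (- (s * C * Rpower p e)) = C * Rpower p e).
  { rewrite Rabs_Ropp, !Rabs_mult, Hs, Rmult_1_l, !Rabs_right; [reflexivity | |];
      apply Rle_ge, Rlt_le; [apply Rpower_pos | assumption]. }
  rewrite <- Hpow.
  eapply Rle_trans; [apply Rabs_triang_inv2|].
  replace (f p - - (s * C * Rpower p e)) with (g p) by (unfold g; ring).
  pose proof (Rabs_triang_inv (g p) (g eps)). rewrite Rabs_minus_sym in Hmvt.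
  assert (0 <= B) by (unfold B; pose proof (Rabs_pos c); pose proof (Rabs_pos c'); lra).
  nra.
Qed.

Lemma f_bounded_away_from_0 eps :
  0 < eps < 1 -> exists B, forall p, eps <= p <= 1 -> Rabs (f p) <= B.
Proof.
  intros Heps.
  set (M := - e * C * Rpower eps (e - 1) + Rabs c).
  assert (Hf' : forall x, eps <= x <= 1 -> Rabs (f' x) <= M).
  { intros x Hx. destruct (f'_bounds x ltac:(lra)) as [Hup _].
    assert (Hpow : Rpower x (e - 1) <= Rpower eps (e - 1))
      by (apply Rpower_le_neg_exp; lra).
    apply (Rmult_le_compat_l (- e * C)) in Hpow; [| nra].
    pose proof (Rle_abs c). unfold M. lra. }
  assert (HM : 0 <= M) by (apply (Rle_trans _ (Rabs (f' eps))); [apply Rabs_pos | apply Hf'; lra]).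
  exists (Rabs (f eps) + M + Rabs (f 1)).
  intros p Hp. pose proof (Rabs_pos (f eps)). pose proof (Rabs_pos (f 1)).
  destruct (Req_dec p 1) as [-> | Hp1]; [lra|].
  assert (Hmvt : Rabs (f p - f eps) <= M * (p - eps)).
  { apply (Rabs_diff_le_of_derivative_bound f f'); [lra | |]; intros x Hx;
      [apply f_derivable | apply Hf']; lra. }
  pose proof (Rabs_triang_inv (f p) (f eps)).
  nra.
Qed.

Theorem Rabs_minus_power_bounded :
  exists B, forall p, 0 < p <= 1 -> Rabs (Rabs (f p) - C * Rpower p e) <= B.
Proof.
  destruct f'_sign_near_0 as [eps [s [Heps [Hs Hsign]]]].
  destruct (Rabs_minus_power_bounded_near_0 eps s Heps Hs Hsign) as [B0 HB0].
  destruct (f_bounded_away_from_0 eps Heps) as [B1 HB1].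
  exists (Rmax B0 (B1 + C * Rpower eps e)).
  intros p Hp. apply Rmax_Rle.
  destruct (Rle_lt_dec p eps) as [Hpe | Hpe]; [left; apply HB0; lra | right].
  assert (Hpow : C * Rpower p e <= C * Rpower eps e)
    by (apply Rmult_le_compat_l; [lra | apply Rpower_le_neg_exp; lra]).
  pose proof (Rmult_lt_0_compat _ _ C_pos (Rpower_pos p e)).
  pose proof (Rabs_pos (f p)). specialize (HB1 p ltac:(lra)).
  apply Rabs_le; lra.
Qed.

End PowerAntiderivative.

Lemma alpha_seq_neq_0 a k : (forall n : Z, a <> IZR n) -> alpha_seq a k <> 0.
Proof.
  intros Ha. induction k as [|k IHk]; cbn [alpha_seq]; [lra|].
  apply Rmult_integral_contrapositive_currified; [assumption|].
  intros Hk. apply (Ha (Z.of_nat (S k))). rewrite <- INR_IZR_INZ. lra.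
Qed.

Lemma alpha_seq_alpha_pred a k : a <> 0 -> alpha_seq a k = (INR k - a) * alpha_pred a k.
Proof.
  intros Ha. destruct k as [|k]; cbn [alpha_seq alpha_pred]; [simpl; field | ring]; assumption.
Qed.

Theorem lemma15 (a : R) (m : nat) (phi : R -> R) (D : nat -> R -> R)
  (W cm cm' : R) :
  (forall n : Z, a <> IZR n) ->
  (1 <= m)%nat ->
  1 + a <= INR m ->
  Cm_derivs01 m phi D ->
  0 < W ->
  (forall p, 0 < p <= 1 ->
     Rabs (D m p) <= alpha_seq a (m - 1) * W * Rpower p (a - INR m) + cm /\
     Rabs (D m p) >= alpha_seq a (m - 1) * W * Rpower p (a - INR m) + cm') ->
  exists c c' : R, forall p, 0 < p <= 1 ->
     Rabs (D (m - 1)%nat p) <= alpha_pred a (m - 1) * W * Rpower p (a - INR m + 1) + c /\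
     Rabs (D (m - 1)%nat p) >= alpha_pred a (m - 1) * W * Rpower p (a - INR m + 1) + c'.
Proof.
  intros Ha Hm Ham [_ [Hder Hcont]] HW Hbounds.
  destruct m as [|k]; [lia|].
  replace (S k - 1)%nat with k in * by lia.
  set (e := a - INR (S k) + 1).
  assert (He : e = a - INR k) by (unfold e; rewrite S_INR; ring).
  assert (e_neg : e < 0).
  { rewrite S_INR in Ham.
    enough (a <> INR k) by lra.
    rewrite INR_IZR_INZ. apply Ha. }
  assert (Hcoef : alpha_seq a k * W = - e * (alpha_pred a k * W)).
  { rewrite alpha_seq_alpha_pred, He by exact (Ha 0%Z). ring. }
  assert (Hcoef_nonneg : 0 <= alpha_seq a k * W).
  { apply (Rpower_neg_exp_coeff_nonneg _ (a - INR (S k)) cm); [lra|].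
    intros p Hp. apply (Rle_trans _ (Rabs (D (S k) p))); [apply Rabs_pos | apply Hbounds, Hp]. }
  assert (HC : 0 < alpha_pred a k * W).
  { pose proof (Rmult_integral_contrapositive_currified _ W (alpha_seq_neq_0 a k Ha) ltac:(lra)).
    nra. }
  destruct (Rabs_minus_power_bounded (D k) (D (S k)) e (alpha_pred a k * W) cm cm')
    as [B HB]; try assumption.
  - intros x Hx. apply deriv_within01_derivable_pt_lim, Hder; [lra | lia | unfold I01; lra].
  - intros x Hx. apply cont_within01_continuity_pt, Hcont; [lra | unfold I01; lra].
  - intros p Hp. replace (e - 1) with (a - INR (S k)) by (unfold e; ring).
    rewrite <- Hcoef. auto.
  - exists B, (- B). intros p Hp. specialize (HB p Hp).
    pose proof (Rle_abs (Rabs (D k p) - alpha_pred a k * W * Rpower p e)).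
    pose proof (Rle_abs (- (Rabs (D k p) - alpha_pred a k * W * Rpower p e))).
    rewrite Rabs_Ropp in *. split; lra.
Qed.
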